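(* Let $\mathbb{K}$ be a field of characteristic $2$, let $(A,L,\theta_L)$ be a restricted Lie–Rinehart algebra, let $(A,M,\theta_M)$ be a strongly abelian restricted Lie–Rinehart algebra, and let $0\to(A,M,\theta_M)\xrightarrow{\iota}(A,E,\theta_E)\xrightarrow{\pi}(A,L,\theta_L)\to0$ be an abelian extension. Then $(M,\rho)$ is a restricted Lie–Rinehart module over $(A,L,\theta_L)$, where $\rho:L\to\mathrm{End}(M)$ is defined by $\rho(x)(m)=\iota^{-1}([\tilde x,\iota(m)]_E)$ for $x\in L$, $m\in M$, with $\tilde x\in E$ such that $\pi(\tilde x)=x$.
   Context: $\mathbb{K}$ has characteristic $2$. Restricted Lie algebra: Lie algebra with $x\mapsto x^{[2]}$, $(\lambda x)^{[2]}=\lambda^2x^{[2]}$, $\mathrm{ad}_{x^{[2]}}=\mathrm{ad}_x^2$, $(x+y)^{[2]}=x^{[2]}+y^{[2]}+[x,y]$. Restricted Lie–Rinehart algebra $(A,L,\theta)$: $A$ commutative associative, $L$ restricted Lie algebra and $A$-module, $\theta:L\to\mathrm{Der}(A)$ an $A$-linear restricted Lie morphism ($\mathrm{Der}(A)$ with commutator and $D^{[2]}=D^2$) with $[x,ay]=a[x,y]+\theta(x)(a)y$ and $(ax)^{[2]}=a^2x^{[2]}+\theta(ax)(a)x$. Morphisms: $A$-linear restricted Lie morphisms $f$ with $\theta_H\circ f=\theta_L$. Strongly abelian: $[m,n]=0$, $m^{[2]}=0$ for all $m,n$. An abelian extension is a short exact sequence of restricted Lie–Rinehart algebras over the same $A$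 as in the claim. A restricted Lie–Rinehart module over $(A,L,\theta_L)$: an $A$-module $M$ with a restricted Lie morphism $\rho:L\to\mathrm{End}(M)$ (i.e. $\rho([x,y])=[\rho(x),\rho(y)]$, $\rho(x^{[2]})=\rho(x)^2$) such that $\rho(x)(am)=a\rho(x)(m)+\theta_L(x)(a)m$. *)

From HB Require Import structures.
From mathcomp Require Import all_boot all_order all_algebra.
Set Implicit Arguments. Unset Strict Implicit. Unset Printing Implicit Defensive.
Import GRing.Theory.
Local Open Scope ring_scope.

(* Conventions: K is a field (characteristic 2 is a hypothesis of the theorem),
   A : comAlgType K is a commutative associative K-algebra, and the carrier of a
   Lie–Rinehart algebra is an A-module L : lmodType A; its K-vector space
   structure is the restriction of scalars along c |-> c%:A. *)

Section RLR.
Variables (K : fieldType) (A : comAlgType K).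

Definition is_derivation (D : A -> A) : Prop :=
  (forall a b, D (a + b) = D a + D b) /\
  (forall (c : K) a, D (c *: a) = c *: D a) /\
  (forall a b, D (a * b) = a * D b + D a * b).

Record is_rLR (L : lmodType A) (br : L -> L -> L) (sq : L -> L)
    (th : L -> A -> A) : Prop := {
  br_addl : forall x y z, br (x + y) z = br x z + br y z;
  br_addr : forall x y z, br x (y + z) = br x y + br x z;
  br_scalel : forall (c : K) x y, br (c%:A *: x) y = c%:A *: br x y;
  br_scaler : forall (c : K) x y, br x (c%:A *: y) = c%:A *: br x y;
  br_alt : forall x, br x x = 0;
  br_jacobi : forall x y z, br x (br y z) + br y (br z x) + br z (br x y) = 0;
  sq_scale : forall (c : K) x, sq (c%:A *: x) = (c ^+ 2)%:A *: sq x;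
  sq_ad : forall x y, br (sq x) y = br x (br x y);
  sq_add : forall x y, sq (x + y) = sq x + sq y + br x y;
  th_der : forall x, is_derivation (th x);
  th_add : forall x y a, th (x + y) a = th x a + th y a;
  th_Alin : forall (b : A) x a, th (b *: x) a = b * th x a;
  th_br : forall x y a, th (br x y) a = th x (th y a) - th y (th x a);
  th_sq : forall x a, th (sq x) a = th x (th x a);
  br_leibniz : forall x (a : A) y, br x (a *: y) = a *: br x y + th x a *: y;
  sq_Ascale : forall (a : A) x, sq (a *: x) = (a ^+ 2) *: sq x + th (a *: x) a *: x
}.

Definition is_rLR_morphism (L H : lmodType A)
    (brL : L -> L -> L) (sqL : L -> L) (thL : L -> A -> A)
    (brH : H -> H -> H) (sqH : H -> H) (thH : H -> A -> A) (f : L -> H) : Prop :=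
  (forall x y, f (x + y) = f x + f y) /\
  (forall (a : A) x, f (a *: x) = a *: f x) /\
  (forall x y, f (brL x y) = brH (f x) (f y)) /\
  (forall x, f (sqL x) = sqH (f x)) /\
  (forall x a, thH (f x) a = thL x a).

Definition strongly_abelian (M : lmodType A) (br : M -> M -> M) (sq : M -> M) :=
  (forall m n, br m n = 0) /\ (forall m, sq m = 0).

Definition is_rLR_module (L : lmodType A) (br : L -> L -> L) (sq : L -> L)
    (th : L -> A -> A) (M : lmodType A) (rho : L -> M -> M) : Prop :=
  (forall x m n, rho x (m + n) = rho x m + rho x n) /\
  (forall x (c : K) m, rho x (c%:A *: m) = c%:A *: rho x m) /\
  (forall x y m, rho (x + y) m = rho x m + rho y m) /\
  (forall (c : K) x m, rho (c%:A *: x) m = c%:A *: rho x m) /\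
  (forall x y m, rho (br x y) m = rho x (rho y m) - rho y (rho x m)) /\
  (forall x m, rho (sq x) m = rho x (rho x m)) /\
  (forall x (a : A) m, rho x (a *: m) = a *: rho x m + th x a *: m).

End RLR.

From mathcomp Require Import all_boot all_algebra.
Set Implicit Arguments. Unset Strict Implicit. Unset Printing Implicit Defensive.
Import GRing.Theory.
Local Open Scope ring_scope.

(* Since M is strongly abelian, [iota n, iota m] = iota [n, m] = 0, so
   [xt, iota m] depends only on x = pi xt; it lies in ker pi = im iota because
   pi [xt, iota m] = [x, pi (iota m)] = [x, 0] = 0.  Every axiom of a restricted
   Lie-Rinehart module is then the image under the injective iota of an identity
   in E: the Jacobi identity gives the bracket rule, ad_(x^[2]) = (ad_x)^2 the
   restricted rule, and the Leibniz rule of E with thE = thL \o pi the anchor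
   rule. *)

Section AdditiveMaps.
Variables (U V : zmodType) (f : U -> V).
Hypothesis fD : {morph f : x y / x + y}.

Lemma morphD0 : f 0 = 0.
Proof. by apply: (addrI (f 0)); rewrite -fD !addr0. Qed.

Lemma morphDN x : f (- x) = - f x.
Proof. by apply: (addrI (f x)); rewrite -fD !subrr morphD0. Qed.

Lemma morphDB x y : f (x - y) = f x - f y.
Proof. by rewrite fD morphDN. Qed.

End AdditiveMaps.

Section Bracket.
Variables (K : fieldType) (A : comAlgType K) (L : lmodType A).
Variables (br : L -> L -> L) (sq : L -> L) (th : L -> A -> A).
Hypothesis HL : is_rLR br sq th.

Lemma br0r x : br x 0 = 0.
Proof. exact: (morphD0 (br_addr HL x)). Qed.

Lemma brNr x y : br x (- y) = - br x y.
Proof. exact: (morphDN (br_addr HL x)). Qed.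

Lemma br_anticomm x y : br y x = - br x y.
Proof.
apply/eqP; rewrite -addr_eq0 addrC; apply/eqP.
have := br_alt HL (x + y).
by rewrite (br_addl HL) !(br_addr HL) !(br_alt HL) add0r addr0.
Qed.

Lemma ad_br x y z : br (br x y) z = br x (br y z) - br y (br x z).
Proof.
have := br_jacobi HL x y z.
rewrite (br_anticomm x z) brNr (br_anticomm (br x y) z) => jacobi.
by apply/esym/eqP; rewrite -subr_eq0 jacobi.
Qed.

End Bracket.

Section AbelianExtension.
Variables (K : fieldType) (A : comAlgType K) (L M E : lmodType A).
Variables (brL : L -> L -> L) (sqL : L -> L) (thL : L -> A -> A).
Variables (brM : M -> M -> M) (sqM : M -> M) (thM : M -> A -> A).
Variables (brE : E -> E -> E) (sqE : E -> E) (thE : E -> A -> A).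
Variables (iota : M -> E) (pi : E -> L).
Hypotheses (HL : is_rLR brL sqL thL) (HE : is_rLR brE sqE thE).
Hypothesis Hiota : is_rLR_morphism brM sqM thM brE sqE thE iota.
Hypothesis Hpi : is_rLR_morphism brE sqE thE brL sqL thL pi.
Hypothesis pi_surj : forall x : L, exists xt : E, pi xt = x.

Let iotaD : {morph iota : m n / m + n} := proj1 Hiota.
Let iotaZ : forall (a : A) m, iota (a *: m) = a *: iota m := proj1 (proj2 Hiota).
Let iota_br : forall m n, iota (brM m n) = brE (iota m) (iota n) :=
  proj1 (proj2 (proj2 Hiota)).
Let piD : {morph pi : xt yt / xt + yt} := proj1 Hpi.
Let piZ : forall (a : A) xt, pi (a *: xt) = a *: pi xt := proj1 (proj2 Hpi).
Let pi_br : forall xt yt, pi (brE xt yt) = brL (pi xt) (pi yt) :=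
  proj1 (proj2 (proj2 Hpi)).
Let pi_sq : forall xt, pi (sqE xt) = sqL (pi xt) := proj1 (proj2 (proj2 (proj2 Hpi))).
Let pi_th : forall xt a, thL (pi xt) a = thE xt a := proj2 (proj2 (proj2 (proj2 Hpi))).

Definition induced_action (rho : L -> M -> M) : Prop :=
  forall x xt m, pi xt = x -> iota (rho x m) = brE xt (iota m).

Section InducedModule.
Variable rho : L -> M -> M.
Hypotheses (iota_inj : injective iota) (Hrho : induced_action rho).

Lemma induced_actionE xt m : iota (rho (pi xt) m) = brE xt (iota m).
Proof. exact: Hrho. Qed.

Lemma induced_action_is_module : is_rLR_module brL sqL thL rho.
Proof.
split; [|split; [|split; [|split; [|split; [|split]]]]].
- move=> x m n; have [xt <-] := pi_surj x; apply: iota_inj.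
  by rewrite iotaD !induced_actionE iotaD (br_addr HE).
- move=> x c m; have [xt <-] := pi_surj x; apply: iota_inj.
  by rewrite iotaZ !induced_actionE iotaZ (br_scaler HE).
- move=> x y m; have [xt <-] := pi_surj x; have [yt <-] := pi_surj y.
  by apply: iota_inj; rewrite iotaD -piD !induced_actionE (br_addl HE).
- move=> c x m; have [xt <-] := pi_surj x; apply: iota_inj.
  by rewrite -piZ iotaZ !induced_actionE (br_scalel HE).
- move=> x y m; have [xt <-] := pi_surj x; have [yt <-] := pi_surj y.
  by apply: iota_inj; rewrite -pi_br (morphDB iotaD) !induced_actionE (ad_br HE).
- move=> x m; have [xt <-] := pi_surj x; apply: iota_inj.
  by rewrite -pi_sq !induced_actionE (sq_ad HE).
- move=> x a m; have [xt <-] := pi_surj x; apply: iota_inj.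
  by rewrite iotaD !iotaZ !induced_actionE iotaZ (br_leibniz HE) pi_th.
Qed.

End InducedModule.

Section InducedActionExists.
Hypothesis HMab : strongly_abelian brM sqM.
Hypothesis ker_pi : forall xt : E, pi xt = 0 <-> exists m : M, xt = iota m.

Lemma pi_iota m : pi (iota m) = 0.
Proof. by apply/ker_pi; exists m. Qed.

Lemma br_iota_in_ker xt m : pi (brE xt (iota m)) = 0.
Proof. by rewrite pi_br pi_iota (br0r HL). Qed.

Lemma br_iota_lift_indep xt yt m :
  pi xt = pi yt -> brE xt (iota m) = brE yt (iota m).
Proof.
move=> pi_xy; have /ker_pi[n def_n] : pi (xt - yt) = 0.
  by rewrite (morphDB piD) pi_xy subrr.
have -> : xt = iota n + yt by rewrite -def_n subrK.
by rewrite (br_addl HE) -iota_br HMab.1 (morphD0 iotaD) add0r.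
Qed.

Lemma induced_action_exists : exists rho, induced_action rho.
Proof.
have lift x : exists xt, pi xt == x by have [xt <-] := pi_surj x; exists xt.
have pre x m : exists m', iota m' == brE (xchoose (lift x)) (iota m).
  by have /ker_pi[m' ->] := br_iota_in_ker (xchoose (lift x)) m; exists m'.
exists (fun x m => xchoose (pre x m)) => x xt m pi_xt.
rewrite (eqP (xchooseP (pre x m))); apply: br_iota_lift_indep.
by rewrite pi_xt (eqP (xchooseP (lift x))).
Qed.

End InducedActionExists.

End AbelianExtension.

Theorem mainTheorem8 (K : fieldType) (A : comAlgType K)
  (hK : 2 \in [pchar K])
  (L : lmodType A) (brL : L -> L -> L) (sqL : L -> L) (thL : L -> A -> A)
  (M : lmodType A) (brM : M -> M -> M) (sqM : M -> M) (thM : M -> A -> A)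
  (E : lmodType A) (brE : E -> E -> E) (sqE : E -> E) (thE : E -> A -> A)
  (iota : M -> E) (pi : E -> L)
  (HL : is_rLR brL sqL thL) (HM : is_rLR brM sqM thM) (HE : is_rLR brE sqE thE)
  (HMab : strongly_abelian brM sqM)
  (Hiota : is_rLR_morphism brM sqM thM brE sqE thE iota)
  (Hpi : is_rLR_morphism brE sqE thE brL sqL thL pi)
  (iota_inj : injective iota)
  (pi_surj : forall x : L, exists e : E, pi e = x)
  (exact : forall e : E, pi e = 0 <-> exists m : M, e = iota m) :
  exists rho : L -> M -> M,
    (forall (x : L) (xt : E) (m : M), pi xt = x -> iota (rho x m) = brE xt (iota m)) /\
    is_rLR_module brL sqL thL rho.
Proof.
have [rho Hrho] := induced_action_exists HL HE Hiota Hpi pi_surj HMab exact.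
exists rho; split; first exact: Hrho.
exact (induced_action_is_module HE Hiota Hpi pi_surj iota_inj Hrho).
Qed.
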